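(* Let $F_1,\dots,F_n\subset\mathbb{R}^d$ be sets of $t$ points each, with elements ordered as $F_j=\{z(j)_1,\dots,z(j)_t\}$, let $k\le t$, and let $(A_1,\dots,A_k)$ be a colourful $k$-partition of them with function representation $(\sigma_1,\dots,\sigma_n)$. Then for real coefficients $\alpha_1,\dots,\alpha_n$, the point $\sum_{j=1}^n\alpha_j x^i_j$ is the same for all $i=1,\dots,k$ if and only if $\sum_{j=1}^n\alpha_j F_j(\sigma_j)=0$.
   Context: A colourful $k$-partition of colour classes $F_1,\dots,F_n$ is a family of $k$ pairwise disjoint sets $A_1,\dots,A_k$ each containing exactly one point of each $F_j$; write $A_i=\{x^i_j: x^i_j\in F_j\}$. Let $\Sigma_{k,t}$ be the set of injective maps $[k]=\{1,\dots,k\}\to[t]$. The function representation of $(A_1,\dots,A_k)$ is $(\sigma_1,\dots,\sigma_n)\in(\Sigma_{k,t})^n$ defined by $\sigma_j(i)=m$ iff $x^i_j=z(j)_m$. Let $u_1,\dots,u_k$ be the vertices of a regular simplex in $\mathbb{R}^{k-1}$ centred at the origin. For $\sigma\in\Sigma_{k,t}$ define $F_j(\sigma)=\sum_{i=1}^k u_i\otimes z(j)_{\sigma(i)}\in\mathbb{R}^{k-1}\otimes\mathbb{R}^d\cong\mathbb{R}^{(k-1)d}$, where $\otimes$ is the tensor product. *)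

From HB Require Import structures.
From mathcomp Require Import all_boot all_order all_algebra.
Set Implicit Arguments. Unset Strict Implicit. Unset Printing Implicit Defensive.
Import Order.TTheory GRing.Theory Num.Theory.
Local Open Scope ring_scope.

Definition sqnorm (R : pzRingType) m (v : 'rV[R]_m) : R := (v *m v^T) 0 0.

(* u_1..u_k are the vertices of a regular simplex in R^(k-1) centred at 0:
   the centroid is the origin and all pairwise distances are equal and
   positive (k equidistant points in R^(k-1) are affinely independent). *)
Definition regular_simplex_centred (R : realFieldType) (k : nat)
    (u : 'I_k -> 'rV[R]_k.-1) : Prop :=
  \sum_(i < k) u i = 0 /\
  exists2 c : R, 0 < c &
    forall i i' : 'I_k, i != i' -> sqnorm (u i - u i') = c.

(* Tensor product a (x) b in R^p (x) R^q, identified with R^(p*q)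
   via the (p x q) matrix a^T b of coordinates a_r b_s. *)
Definition tensor (R : pzRingType) p q (a : 'rV[R]_p) (b : 'rV[R]_q)
  : 'M[R]_(p, q) := a^T *m b.

(* Colourful k-partition of colour classes F_j = {z j m | m < t}:
   x i j is the point x^i_j of A_i in F_j; A_i = {x i j | j}.
   The A_i are pairwise disjoint. *)
Definition colourful_partition (R : pzRingType) (d n t k : nat)
    (z : 'I_n -> 'I_t -> 'rV[R]_d) (x : 'I_k -> 'I_n -> 'rV[R]_d) : Prop :=
  (forall i j, exists m, x i j = z j m) /\
  (forall i i', i != i' -> forall j j', x i j != x i' j').

Definition function_representation (R : pzRingType) (d n t k : nat)
    (z : 'I_n -> 'I_t -> 'rV[R]_d) (x : 'I_k -> 'I_n -> 'rV[R]_d)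
    (sigma : 'I_n -> 'I_k -> 'I_t) : Prop :=
  (forall j, injective (sigma j)) /\
  (forall i j m, sigma j i = m <-> x i j = z j m).

Definition Fsig (R : pzRingType) (d n t k : nat)
    (u : 'I_k -> 'rV[R]_k.-1) (z : 'I_n -> 'I_t -> 'rV[R]_d)
    (j : 'I_n) (s : 'I_k -> 'I_t) : 'M[R]_(k.-1, d) :=
  \sum_(i < k) tensor (u i) (z j (s i)).

From HB Require Import structures.
From mathcomp Require Import all_boot all_order all_algebra.
From mathcomp Require Import ring.
Import Order.TTheory GRing.Theory Num.Theory.
Set Implicit Arguments. Unset Strict Implicit.
Local Open Scope ring_scope.

(* Write [y_i := sum_j alpha_j x^i_j]; then [sum_j alpha_j F_j(sigma_j)] is
   the tensor [sum_i u_i (x) y_i].  For a centred regular simplex with common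
   squared norm [a] and common squared distance [c], the Gram entries are
   [<u_l, u_i> = a - c/2 + [i = l] c/2], so pairing the tensor with [u_l]
   gives [(a - c/2) sum_i y_i + (c/2) y_l].  If the tensor vanishes, every
   [y_l] is therefore the same multiple of [sum_i y_i]; conversely a constant
   family [y] is annihilated because [sum_i u_i = 0]. *)

Definition rdot (R : pzRingType) m (a b : 'rV[R]_m) : R := (a *m b^T) 0 0.

Lemma rdotC (R : comPzRingType) m (a b : 'rV[R]_m) : rdot a b = rdot b a.
Proof. by rewrite /rdot -{1}[a *m _]trmxK mxE trmx_mul trmxK. Qed.

Lemma sqnormB (R : comPzRingType) m (a b : 'rV[R]_m) :
  sqnorm (a - b) = rdot a a + rdot b b - rdot a b *+ 2.
Proof.
have entryB (A B : 'M[R]_1) : (A - B) 0 0 = A 0 0 - B 0 0 by rewrite !mxE.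
rewrite /sqnorm raddfB /= mulmxBl !mulmxBr !entryB -!/(rdot _ _) (rdotC b a).
by rewrite mulr2n; ring.
Qed.

Lemma mulmx_sum_tensor (R : pzRingType) k p d (v : 'rV[R]_p)
    (u : 'I_k -> 'rV[R]_p) (y : 'I_k -> 'rV[R]_d) :
  v *m \sum_i (u i)^T *m y i = \sum_i rdot v (u i) *: y i.
Proof.
rewrite mulmx_sumr; apply: eq_bigr => i _.
by rewrite mulmxA [v *m _]mx11_scalar mul_scalar_mx.
Qed.

Lemma sum_tensor_const (R : pzRingType) k p d (u : 'I_k -> 'rV[R]_p)
    (y : 'rV[R]_d) :
  \sum_i u i = 0 -> \sum_i (u i)^T *m y = 0.
Proof. by move=> u0; rewrite -mulmx_suml -raddf_sum u0 raddf0 mul0mx. Qed.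

Section CentredRegularSimplex.

Variables (R : realFieldType) (k : nat) (u : 'I_k -> 'rV[R]_k.-1) (c : R).
Hypothesis u_centred : \sum_i u i = 0.
Hypothesis u_equidistant : forall i i', i != i' -> sqnorm (u i - u i') = c.

Lemma simplex_rdot i i' :
  rdot (u i) (u i') *+ 2 =
    rdot (u i) (u i) + rdot (u i') (u i') - c + (if i' == i then c else 0).
Proof.
have [->|ne] := eqVneq i' i; first by rewrite subrK mulr2n.
by rewrite addr0 -(u_equidistant (i := i) (i' := i')) 1?eq_sym // sqnormB; ring.
Qed.

Lemma simplex_rdot_sum i : \sum_i' rdot (u i) (u i') = 0.
Proof.
by rewrite /rdot -summxE -mulmx_sumr -raddf_sum u_centred raddf0 mulmx0 mxE.
Qed.

(* Summing [simplex_rdot] over [i'] gives [k a_i = (k - 1) c - sum_i' a_i'],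
   whose right-hand side does not depend on [i]. *)
Lemma simplex_sqnorm_const i i' : rdot (u i) (u i) = rdot (u i') (u i').
Proof.
pose a i := rdot (u i) (u i); pose A := \sum_i a i.
have Ea l : a l *+ k = c *+ k - c - A.
  have := congr1 (fun x => x *+ 2) (simplex_rdot_sum l).
  rewrite mul0rn -sumrMnl (eq_bigr _ (fun i' _ => simplex_rdot l i')).
  rewrite !big_split /= !sumr_const card_ord -big_mkcond big_pred1_eq.
  move=> H; apply/eqP; rewrite -subr_eq0 -H /A /a.
  by rewrite mulNrn; apply/eqP; ring.
have k0 : (k%:R : R) != 0.
  by rewrite pnatr_eq0 -lt0n (leq_ltn_trans _ (ltn_ord i)).
by apply: (mulfI k0); rewrite !mulr_natl -/(a i) -/(a i') !Ea.
Qed.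

Lemma simplex_mulmx_sum_tensor d (y : 'I_k -> 'rV[R]_d) l :
  (u l *m \sum_i (u i)^T *m y i) *+ 2 =
    (rdot (u l) (u l) *+ 2 - c) *: \sum_i y i + c *: y l.
Proof.
rewrite mulmx_sum_tensor -sumrMnl scaler_sumr.
under eq_bigr => i _ do
  rewrite scalerMnl simplex_rdot (simplex_sqnorm_const i l) scalerDl.
rewrite big_split /= [X in _ + X](bigD1 l) //=.
rewrite [X in _ + (_ + X)]big1 => [|i /negbTE->]; last by rewrite scale0r.
by rewrite eqxx addr0 mulr2n.
Qed.

Hypothesis c_gt0 : 0 < c.

Lemma simplex_sum_tensor_eq0 d (y : 'I_k -> 'rV[R]_d) :
  \sum_i (u i)^T *m y i = 0 -> forall i i', y i = y i'.
Proof.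
move=> Y0; have Ey l : c *: y l = - ((rdot (u l) (u l) *+ 2 - c) *: \sum_i y i).
  apply/eqP; rewrite -addr_eq0 addrC -simplex_mulmx_sum_tensor.
  by rewrite Y0 mulmx0 mul0rn.
move=> i i'; apply: (scalerI (lt0r_neq0 c_gt0)).
by rewrite !Ey (simplex_sqnorm_const i i').
Qed.

End CentredRegularSimplex.

Lemma regular_simplex_tensor_eq0 (R : realFieldType) k d
    (u : 'I_k -> 'rV[R]_k.-1) (y : 'I_k -> 'rV[R]_d) :
  regular_simplex_centred u ->
  (forall i i', y i = y i') <-> \sum_i (u i)^T *m y i = 0.
Proof.
case=> u0 [c c_gt0 uc]; split; last exact/(simplex_sum_tensor_eq0 u0 uc c_gt0).
case: k u y u0 {uc} => [|k] u y u0 yc; first by rewrite big_ord0.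
by under eq_bigr => i _ do rewrite (yc i ord0); exact: sum_tensor_const.
Qed.

Lemma sum_Fsig (R : comPzRingType) d n t k (u : 'I_k -> 'rV[R]_k.-1)
    (z : 'I_n -> 'I_t -> 'rV[R]_d) (s : 'I_n -> 'I_k -> 'I_t)
    (alpha : 'I_n -> R) :
  \sum_(j < n) alpha j *: Fsig u z j (s j) =
    \sum_i (u i)^T *m \sum_(j < n) alpha j *: z j (s j i).
Proof.
rewrite /Fsig /tensor; under eq_bigr => j _ do rewrite scaler_sumr.
rewrite exchange_big /=; apply: eq_bigr => i _.
by rewrite mulmx_sumr; apply: eq_bigr => j _; rewrite scalemxAr.
Qed.

Theorem lemma1 (R : realFieldType) (d n t k : nat)
    (z : 'I_n -> 'I_t -> 'rV[R]_d)
    (Hz : forall j, injective (z j))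
    (Hkt : (k <= t)%N)
    (x : 'I_k -> 'I_n -> 'rV[R]_d)
    (sigma : 'I_n -> 'I_k -> 'I_t)
    (u : 'I_k -> 'rV[R]_k.-1)
    (Hu : regular_simplex_centred u)
    (Hx : colourful_partition z x)
    (Hs : function_representation z x sigma)
    (alpha : 'I_n -> R) :
  (forall i i' : 'I_k,
      \sum_(j < n) alpha j *: x i j = \sum_(j < n) alpha j *: x i' j)
  <-> \sum_(j < n) alpha j *: Fsig u z j (sigma j) = 0.
Proof.
have y_sigma i :
    \sum_(j < n) alpha j *: x i j = \sum_(j < n) alpha j *: z j (sigma j i).
  by apply: eq_bigr => j _; congr (_ *: _); apply/(Hs.2 i j _).1.
rewrite sum_Fsig -(regular_simplex_tensor_eq0 _ Hu).
by split=> y_const i i'; move: (y_const i i'); rewrite !y_sigma.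
Qed.
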